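(* Let $\alpha\in[0,1)$, $K_\alpha(x,y)=\dfrac{1}{x^2+2\cos(\pi\alpha)xy+y^2}$ and $Q_\alpha(x,y)=y+x\cos(\pi\alpha)$ for $x,y>0$. For integers $p\ge0$ define $$T_{\alpha,2p}=(2p)!\sum_{k=0}^p(-1)^{p-k}\binom{p+k}{p-k}(4Q_\alpha^2)^kK_\alpha^{p+k+1},\qquad T_{\alpha,2p+1}=2(2p+1)!\,Q_\alpha\sum_{k=0}^p(-1)^{p+1-k}\binom{p+1+k}{p-k}(4Q_\alpha^2)^kK_\alpha^{p+k+2}.$$ Then for every $n\ge0$, $\dfrac{\partial^nK_\alpha}{\partial y^n}=T_{\alpha,n}$. *)

From Stdlib Require Import Reals.
From Coquelicot Require Import Coquelicot.
Open Scope R_scope.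

Definition Kal (a x y : R) : R := / (x ^ 2 + 2 * cos (PI * a) * x * y + y ^ 2).

Definition Qal (a x y : R) : R := y + x * cos (PI * a).

Definition Teven (a : R) (p : nat) (x y : R) : R :=
  INR (Factorial.fact (2 * p)) *
  sum_f_R0 (fun k => (-1) ^ (p - k) * Binomial.C (p + k) (p - k)
                     * (4 * Qal a x y ^ 2) ^ k * Kal a x y ^ (p + k + 1)) p.

Definition Todd (a : R) (p : nat) (x y : R) : R :=
  2 * INR (Factorial.fact (2 * p + 1)) * Qal a x y *
  sum_f_R0 (fun k => (-1) ^ (p + 1 - k) * Binomial.C (p + 1 + k) (p - k)
                     * (4 * Qal a x y ^ 2) ^ k * Kal a x y ^ (p + k + 2)) p.

Definition Tal (a : R) (n : nat) (x y : R) : R :=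
  if Nat.even n then Teven a (Nat.div2 n) x y else Todd a (Nat.div2 n) x y.

(* With D = x^2 + 2 cos(pi a) x y + y^2, K = 1/D and Q = y + x cos(pi a) one has
   dQ/dy = 1 and dK/dy = -2 Q K^2.  Hence a sum  sum_k c_k (4Q^2)^k K^(m+k)  differentiates
   to  2Q sum_k (4(k+1) c_(k+1) - (m+k) c_k) (4Q^2)^k K^(m+k+1).  Both T_(2p) and T_(2p+1)/Q
   have this shape, so T_(2p)' = T_(2p+1) and T_(2p+1)' = T_(2p+2) reduce to two three-term
   recurrences between the signed binomial coefficients, checked on their factorial closed
   forms.  Induction on n then gives the claim on y > 0, where D > 0 as cos(pi a) > -1. *)

From Stdlib Require Import Reals Lra Lia.
From Coquelicot Require Import Coquelicot.
Open Scope R_scope.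
Import Factorial.

Lemma Derive_n_of_is_derive_chain (U : R -> Prop) (f : R -> R) (T : nat -> R -> R) :
  open U ->
  (forall t, U t -> f t = T O t) ->
  (forall n t, U t -> is_derive (T n) t (T (S n) t)) ->
  forall n t, U t -> ex_derive_n f n t /\ Derive_n f n t = T n t.
Proof.
intros HU Hf HT n; induction n as [|n IH]; intros t Ht.
- split; [exact I | exact (Hf t Ht)].
- assert (Hloc : locally t (fun s => T n s = Derive_n f n s)).
  { apply (filter_imp U); [intros s Hs; symmetry; apply IH, Hs | apply HU, Ht]. }
  pose proof (is_derive_ext_loc _ _ _ _ Hloc (HT n t Ht)) as D.
  split; [exists (T (S n) t); exact D | exact (is_derive_unique _ _ _ D)].
Qed.

Definition kq_sum (c : nat -> R) (m p : nat) (X K : R) : R :=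
  sum_f_R0 (fun k => c k * X ^ k * K ^ (m + k)) p.

Lemma kq_sum_ext (c d : nat -> R) m p X K :
  (forall k, (k <= p)%nat -> c k = d k) -> kq_sum c m p X K = kq_sum d m p X K.
Proof. intros H; apply sum_eq; intros k Hk; rewrite H by exact Hk; reflexivity. Qed.

Lemma kq_sum_scal r (c : nat -> R) m p X K :
  kq_sum (fun k => r * c k) m p X K = r * kq_sum c m p X K.
Proof. unfold kq_sum; rewrite scal_sum; apply sum_eq; intros; ring. Qed.

Lemma kq_sum_plus (c d : nat -> R) m p X K :
  kq_sum (fun k => c k + d k) m p X K = kq_sum c m p X K + kq_sum d m p X K.
Proof. unfold kq_sum; rewrite <- plus_sum; apply sum_eq; intros; ring. Qed.

Lemma kq_sum_S (c : nat -> R) m p X K :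
  c (S p) = 0 -> kq_sum c m (S p) X K = kq_sum c m p X K.
Proof. intros H; unfold kq_sum; rewrite tech5, H; ring. Qed.

Definition shift_coef (c : nat -> R) (k : nat) : R :=
  match k with O => 0 | S j => c j end.

Lemma kq_sum_mulX (c : nat -> R) m p X K :
  X * kq_sum c (S m) p X K = kq_sum (shift_coef c) m (S p) X K.
Proof.
unfold kq_sum; induction p as [|p IH].
- simpl; rewrite <- plus_n_Sm; simpl; ring.
- rewrite (tech5 _ p), (tech5 _ (S p)), Rmult_plus_distr_l, IH; simpl shift_coef.
  rewrite <- !plus_n_Sm; simpl; ring.
Qed.

(* [exact_derive D] closes [is_derive f t l] with [D : is_derive f t v], leaving [v = l] in R. *)
Ltac exact_derive D :=
  match type of D with is_derive _ _ ?v =>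
    match goal with |- is_derive _ _ ?l =>
      replace l with v;
      [ exact D
      | change (@eq R v l);
        repeat change (plus ?u ?w) with (Rplus u w);
        repeat change (mult ?u ?w) with (Rmult u w) ] end end.

Section KQSumDerivative.

Variables (Q K : R -> R) (t : R).
Hypothesis HQ : is_derive Q t 1.
Hypothesis HK : is_derive K t (-2 * Q t * K t ^ 2).

Lemma is_derive_kq_term c k n :
  is_derive (fun s => c * (4 * Q s ^ 2) ^ k * K s ^ n) t
    (2 * Q t * c * (4 * INR k * (4 * Q t ^ 2) ^ pred k * K t ^ n
                    - INR n * (4 * Q t ^ 2) ^ k * K t ^ S n)).
Proof.
pose proof (is_derive_scal _ _ 4 _ (is_derive_pow Q 2 t 1 HQ)) as HX.
pose proof (is_derive_mult _ _ t _ _ (is_derive_pow _ k t _ HX)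
              (is_derive_pow K n t _ HK) Rmult_comm) as D.
apply (is_derive_ext (fun s => c * ((4 * Q s ^ 2) ^ k * K s ^ n))); [intro s; symmetry; apply Rmult_assoc|].
match type of D with is_derive _ _ ?v => replace (2 * Q t * c * _) with (c * v) end.
- exact (is_derive_scal _ _ c _ D).
- cbv [plus mult]; destruct n as [|n]; [simpl; ring | rewrite S_INR; simpl; ring].
Qed.

Lemma is_derive_kq_sum (c : nat -> R) m p :
  c (S p) = 0 ->
  is_derive (fun s => kq_sum c m p (4 * Q s ^ 2) (K s)) t
    (2 * Q t * kq_sum (fun k => 4 * INR (S k) * c (S k) - INR (m + k) * c k)
                    (S m) p (4 * Q t ^ 2) (K t)).
Proof.
intros Hc; set (X := 4 * Q t ^ 2).
(* The index shift in the first half of each term leaves over the top term of index p+1. *)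
assert (G : forall p, is_derive (fun s => kq_sum c m p (4 * Q s ^ 2) (K s)) t
  (2 * Q t * (kq_sum (fun k => 4 * INR (S k) * c (S k) - INR (m + k) * c k) (S m) p X (K t)
              - 4 * INR (S p) * c (S p) * X ^ p * K t ^ (S m + p)))).
{ clear p Hc; induction p as [|p IH]; unfold kq_sum in *; simpl sum_f_R0.
  - pose proof (is_derive_kq_term (c O) O m) as D.
    rewrite Nat.add_0_r; exact_derive D.
    unfold X; simpl; rewrite Nat.add_0_r; ring.
  - pose proof (is_derive_plus _ _ _ _ _ IH (is_derive_kq_term (c (S p)) (S p) (m + S p))) as D.
    exact_derive D.
    rewrite <- !plus_n_Sm; fold X; simpl; ring. }
pose proof (G p) as D; rewrite Hc in D; exact_derive D; ring.
Qed.
End KQSumDerivative.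

(* The coefficients of T_(2p) and T_(2p+1), cut off at k = p: for k > p the formulas
   in [Teven] and [Todd] would give junk from truncated subtraction. *)
Definition even_coef (p k : nat) : R :=
  if (k <=? p)%nat then (-1) ^ (p - k) * Binomial.C (p + k) (p - k) else 0.

Definition odd_coef (p k : nat) : R :=
  if (k <=? p)%nat then (-1) ^ (p + 1 - k) * Binomial.C (p + 1 + k) (p - k) else 0.

Lemma INR_fact_S n : INR (fact (S n)) = INR (S n) * INR (fact n).
Proof. rewrite fact_simpl; apply mult_INR. Qed.

(* Clearing denominators leaves side conditions [INR (fact _) <> 0] or [e <> 0] with
   e a sum of [INR] terms and a positive constant. *)
Ltac field_INR :=
  field; repeat split;
  first [ apply INR_fact_neq_0
        | apply Rgt_not_eq;
          repeat match goal with |- context [INR ?n] =>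
            let h := fresh in pose proof (pos_INR n) as h; revert h; generalize (INR n); intros
          end;
          lra ].

Ltac INR_expand := repeat rewrite ?S_INR, ?plus_INR, ?mult_INR; simpl INR.

Lemma even_coef_fact k r :
  even_coef (k + r) k = (-1) ^ r * INR (fact (2 * k + r)) / (INR (fact (2 * k)) * INR (fact r)).
Proof.
unfold even_coef, Binomial.C; rewrite (proj2 (Nat.leb_le k (k + r))) by lia.
replace (k + r - k)%nat with r by lia; replace (k + r + k - r)%nat with (2 * k)%nat by lia.
replace (k + r + k)%nat with (2 * k + r)%nat by lia; field_INR.
Qed.

Lemma odd_coef_fact k r :
  odd_coef (k + r) k = - (-1) ^ r * INR (fact (2 * k + 1 + r)) / (INR (fact (2 * k + 1)) * INR (fact r)).
Proof.
unfold odd_coef, Binomial.C; rewrite (proj2 (Nat.leb_le k (k + r))) by lia.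
replace (k + r + 1 - k)%nat with (S r) by lia; replace (k + r - k)%nat with r by lia.
replace (k + r + 1 + k - r)%nat with (2 * k + 1)%nat by lia.
replace (k + r + 1 + k)%nat with (2 * k + 1 + r)%nat by lia; simpl pow; field_INR.
Qed.

Lemma even_coef_out p k : (p < k)%nat -> even_coef p k = 0.
Proof. intros H; unfold even_coef; rewrite (proj2 (Nat.leb_gt k p) H); reflexivity. Qed.

Lemma odd_coef_out p k : (p < k)%nat -> odd_coef p k = 0.
Proof. intros H; unfold odd_coef; rewrite (proj2 (Nat.leb_gt k p) H); reflexivity. Qed.

Lemma even_coef_diag p : even_coef p p = 1.
Proof. rewrite <- (Nat.add_0_r p) at 1; rewrite even_coef_fact, Nat.add_0_r; simpl; field_INR. Qed.

Lemma odd_coef_diag p : odd_coef p p = -1.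
Proof. rewrite <- (Nat.add_0_r p) at 1; rewrite odd_coef_fact, Nat.add_0_r; simpl; field_INR. Qed.

Lemma even_coef_step p k : (k <= p)%nat ->
  4 * INR (S k) * even_coef p (S k) - INR (S p + k) * even_coef p k
  = INR (2 * p + 1) * odd_coef p k.
Proof.
intros Hk; destruct (Nat.eq_dec k p) as [->|Hne].
- rewrite even_coef_out, even_coef_diag, odd_coef_diag by lia.
  replace (S p + p)%nat with (2 * p + 1)%nat by lia; ring.
- destruct (Nat.le_exists_sub (S k) p) as [r [-> _]]; [lia|].
  rewrite (Nat.add_comm r (S k)), even_coef_fact.
  replace (S k + r)%nat with (k + S r)%nat by lia; rewrite even_coef_fact, odd_coef_fact.
  replace (2 * S k + r)%nat with (S (S (2 * k + r))) by lia.
  replace (2 * k + S r)%nat with (S (2 * k + r)) by lia.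
  replace (2 * k + 1 + S r)%nat with (S (S (2 * k + r))) by lia.
  replace (2 * S k)%nat with (S (S (2 * k))) by lia.
  replace (2 * k + 1)%nat with (S (2 * k)) by lia.
  rewrite !INR_fact_S; INR_expand; simpl pow; field_INR.
Qed.

Lemma odd_coef_step_0 p : 2 * odd_coef p 0 = INR (2 * p + 2) * even_coef (S p) 0.
Proof.
rewrite <- (Nat.add_0_l p) at 1; rewrite <- (Nat.add_0_l (S p)).
rewrite odd_coef_fact, even_coef_fact; simpl Nat.mul; simpl Nat.add.
rewrite INR_fact_S; INR_expand; simpl pow; field_INR.
Qed.

Lemma odd_coef_step p k : (k <= p)%nat ->
  (2 + 4 * INR (S k)) * odd_coef p (S k) - INR (S (S p) + k) * odd_coef p k
  = INR (2 * p + 2) * even_coef (S p) (S k).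
Proof.
intros Hk; destruct (Nat.eq_dec k p) as [->|Hne].
- rewrite odd_coef_out, odd_coef_diag, even_coef_diag by lia.
  replace (S (S p) + p)%nat with (2 * p + 2)%nat by lia; ring.
- destruct (Nat.le_exists_sub (S k) p) as [r [-> _]]; [lia|].
  rewrite (Nat.add_comm r (S k)), odd_coef_fact.
  replace (S (S k + r))%nat with (S k + S r)%nat by lia; rewrite even_coef_fact.
  replace (S k + r)%nat with (k + S r)%nat by lia; rewrite odd_coef_fact.
  replace (2 * S k + 1 + r)%nat with (S (S (S (2 * k + r)))) by lia.
  replace (2 * S k + S r)%nat with (S (S (S (2 * k + r)))) by lia.
  replace (2 * k + 1 + S r)%nat with (S (S (2 * k + r))) by lia.
  replace (2 * S k + 1)%nat with (S (S (S (2 * k)))) by lia.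
  replace (2 * S k)%nat with (S (S (2 * k))) by lia.
  replace (2 * k + 1)%nat with (S (2 * k)) by lia.
  rewrite !INR_fact_S; INR_expand; simpl pow; field_INR.
Qed.

Lemma cos_PI_gt_m1 a : 0 <= a -> a < 1 -> -1 < cos (PI * a).
Proof.
intros ha0 ha1; rewrite <- cos_PI; pose proof PI_RGT_0.
destruct (Req_dec a 0) as [->|Ha].
- rewrite Rmult_0_r, cos_0, cos_PI; lra.
- apply cos_decreasing_1; nra.
Qed.

Lemma quadratic_form_pos c x t : -1 < c -> 0 < x -> 0 < t -> 0 < x ^ 2 + 2 * c * x * t + t ^ 2.
Proof.
intros Hc Hx Ht.
assert (0 < (1 + c) * (x * t)) by (apply Rmult_lt_0_compat; nra).
replace (x ^ 2 + 2 * c * x * t + t ^ 2) with ((x - t) ^ 2 + 2 * ((1 + c) * (x * t))) by ring.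
pose proof (pow2_ge_0 (x - t)); lra.
Qed.

Lemma is_derive_Qal a x t : is_derive (Qal a x) t 1.
Proof. unfold Qal; auto_derive; auto; ring. Qed.

Lemma is_derive_Kal a x t : x ^ 2 + 2 * cos (PI * a) * x * t + t ^ 2 <> 0 ->
  is_derive (Kal a x) t (-2 * Qal a x t * Kal a x t ^ 2).
Proof.
intros H; unfold Kal, Qal; auto_derive.
- contradict H; rewrite <- H; ring.
- field; contradict H; rewrite <- H; ring.
Qed.

Lemma Teven_kq_sum a p x y :
  Teven a p x y = INR (fact (2 * p)) * kq_sum (even_coef p) (S p) p (4 * Qal a x y ^ 2) (Kal a x y).
Proof.
unfold Teven, kq_sum; f_equal; apply sum_eq; intros k Hk.
unfold even_coef; rewrite (proj2 (Nat.leb_le k p) Hk).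
replace (p + k + 1)%nat with (S p + k)%nat by lia; reflexivity.
Qed.

Lemma Todd_kq_sum a p x y :
  Todd a p x y = 2 * INR (fact (2 * p + 1)) * Qal a x y
                 * kq_sum (odd_coef p) (S (S p)) p (4 * Qal a x y ^ 2) (Kal a x y).
Proof.
unfold Todd, kq_sum; f_equal; apply sum_eq; intros k Hk.
unfold odd_coef; rewrite (proj2 (Nat.leb_le k p) Hk).
replace (p + k + 2)%nat with (S (S p) + k)%nat by lia; reflexivity.
Qed.

Section DerivativeSteps.

Variables (a x t : R).
Hypothesis Hden : x ^ 2 + 2 * cos (PI * a) * x * t + t ^ 2 <> 0.

Lemma is_derive_Teven p : is_derive (Teven a p x) t (Todd a p x t).
Proof.
apply (is_derive_ext (fun s => INR (fact (2 * p))
         * kq_sum (even_coef p) (S p) p (4 * Qal a x s ^ 2) (Kal a x s))).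
{ intro s; symmetry; apply Teven_kq_sum. }
pose proof (is_derive_scal _ _ (INR (fact (2 * p))) _
  (is_derive_kq_sum _ _ t (is_derive_Qal a x t) (is_derive_Kal a x t Hden)
     (even_coef p) (S p) p (even_coef_out p (S p) (Nat.lt_succ_diag_r p)))) as D.
exact_derive D.
rewrite Todd_kq_sum, (kq_sum_ext _ (fun k => INR (2 * p + 1) * odd_coef p k)), kq_sum_scal.
- replace (2 * p + 1)%nat with (S (2 * p)) by lia; rewrite INR_fact_S; ring.
- intros k Hk; apply even_coef_step, Hk.
Qed.

Lemma is_derive_Todd p : is_derive (Todd a p x) t (Teven a (S p) x t).
Proof.
set (B' := fun k => 4 * INR (S k) * odd_coef p (S k) - INR (S (S p) + k) * odd_coef p k).
apply (is_derive_ext (fun s => 2 * INR (fact (2 * p + 1)) * Qal a x s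
         * kq_sum (odd_coef p) (S (S p)) p (4 * Qal a x s ^ 2) (Kal a x s))).
{ intro s; symmetry; apply Todd_kq_sum. }
pose proof (is_derive_mult _ _ t _ _
  (is_derive_scal _ _ (2 * INR (fact (2 * p + 1))) _ (is_derive_Qal a x t))
  (is_derive_kq_sum _ _ t (is_derive_Qal a x t) (is_derive_Kal a x t Hden)
     (odd_coef p) (S (S p)) p (odd_coef_out p (S p) (Nat.lt_succ_diag_r p)))
  Rmult_comm) as D.
exact_derive D.
symmetry.
transitivity (INR (fact (2 * p + 1))
  * kq_sum (fun k => 2 * odd_coef p k + shift_coef B' k) (S (S p)) (S p)
      (4 * Qal a x t ^ 2) (Kal a x t)).
- rewrite Teven_kq_sum, (kq_sum_ext (fun k => 2 * odd_coef p k + shift_coef B' k)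
                         (fun k => INR (2 * p + 2) * even_coef (S p) k)), kq_sum_scal.
  + replace (2 * S p)%nat with (S (2 * p + 1)) by lia; rewrite INR_fact_S.
    replace (S (2 * p + 1)) with (2 * p + 2)%nat by lia; ring.
  + intros [|k] Hk; [rewrite <- odd_coef_step_0; simpl; ring|].
    rewrite <- odd_coef_step by lia; unfold B', shift_coef; ring.
- rewrite kq_sum_plus, kq_sum_scal, <- kq_sum_mulX, kq_sum_S by (apply odd_coef_out; lia).
  unfold B'; ring.
Qed.

End DerivativeSteps.

Lemma Tal_even a p x y : Tal a (2 * p) x y = Teven a p x y.
Proof. unfold Tal; rewrite Nat.even_even, Nat.div2_double; reflexivity. Qed.

Lemma Tal_odd a p x y : Tal a (2 * p + 1) x y = Todd a p x y.
Proof. unfold Tal; rewrite Nat.even_odd, Nat.div2_odd'; reflexivity. Qed.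

Lemma Tal_0 a x y : Tal a 0 x y = Kal a x y.
Proof. unfold Tal, Teven, Binomial.C; simpl; field. Qed.

Lemma is_derive_Tal a x t n : x ^ 2 + 2 * cos (PI * a) * x * t + t ^ 2 <> 0 ->
  is_derive (Tal a n x) t (Tal a (S n) x t).
Proof.
intros Hden; destruct (Nat.Even_or_Odd n) as [[p ->] | [p ->]].
- replace (S (2 * p)) with (2 * p + 1)%nat by lia; rewrite Tal_odd.
  apply (is_derive_ext (Teven a p x)); [intro s; symmetry; apply Tal_even|].
  apply is_derive_Teven, Hden.
- replace (S (2 * p + 1)) with (2 * S p)%nat by lia; rewrite Tal_even.
  apply (is_derive_ext (Todd a p x)); [intro s; symmetry; apply Tal_odd|].
  apply is_derive_Todd, Hden.
Qed.

Theorem lemma1 (a : R) (ha0 : 0 <= a) (ha1 : a < 1) (x y : R) (hx : 0 < x) (hy : 0 < y)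
  (n : nat) :
  ex_derive_n (fun t => Kal a x t) n y /\
  Derive_n (fun t => Kal a x t) n y = Tal a n x y.
Proof.
apply (Derive_n_of_is_derive_chain (fun t => 0 < t) _ (fun n => Tal a n x)); [apply open_gt | | | exact hy].
- intros t _; symmetry; apply Tal_0.
- intros m t ht; apply is_derive_Tal, Rgt_not_eq, quadratic_form_pos;
    [apply cos_PI_gt_m1 | |]; assumption.
Qed.
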